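(* In the two-parallel-path setting with the linear decision rule, suppose the inputs $f_s(t),b_d(t)$ are positive and non-decreasing in $t$, all initial pheromone levels are positive, and the initial flows at vertices other than $s,d$ satisfy $f_v(0)\le f_s(0)$, $b_v(0)\le b_d(0)$. Then for every edge $(u,v)\in E$ and every integer $t\ge0$ with $$t\ \ge\ T_1:=\max_{(u,v)\in E}\frac{\log\!\big(p_{uv}(0)/(f_s(0)+b_d(0))\big)}{\log(1/\delta)},$$ we have $p_{uv}(t)\le\dfrac{2\,(f_s(t)+b_d(t))}{1-\delta}$.
   Context: Model (linear decision rule). Directed graph $G=(V,E)$, source $s$, destination $d$, discrete time; pheromone $p_{uv}(t)$, forward flows $f_v(t)$, backward flows $b_v(t)$; leakages $l_v\in[0,1]$; decay $\delta\in(0,1)$; exogenous inputs $f_s(t),b_d(t)$. Edge flows: $f_{uv}(t)=f_u(t)p_{uv}(t)/\sum_{z:(u,z)\in E}p_{uz}(t)$, $b_{uv}(t)=b_v(t)p_{uv}(t)/\sum_{z:(z,v)\in E}p_{zv}(t)$ (at a vertex with a single outgoing, resp. incoming, edge the whole flow goes along it). Updates: $f_v(t+1)=(1-l_v)\sum_{z:(z,v)\in E}f_{zv}(t)$ for $v\neq s$, $b_u(t+1)=(1-l_u)\sum_{z:(u,z)\in E}b_{uz}(t)$ for $u\ne d$, $p_{uv}(t+1)=\delta(p_{uv}(t)+f_{uv}(t)+b_{uv}(t))$. Two parallel paths: $G$ is the union of directed paths $P_1,P_2$ from $s$ to $d$ sharing only $s,d$. *)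

From mathcomp Require Import all_boot all_order all_algebra.
From mathcomp Require Import all_classical all_reals all_analysis.
Set Implicit Arguments. Unset Strict Implicit. Unset Printing Implicit Defensive.
Import Order.TTheory GRing.Theory Num.Theory.
Local Open Scope ring_scope.

Section Model.
Variables (V : finType) (R : realType).

Definition path_edges (s : V) (p : seq V) : seq (V * V) := zip (s :: p) p.

(* p is (the list of vertices after s of) a simple directed E-path from s to d *)
Definition is_st_path (E : rel V) (s d : V) (p : seq V) : Prop :=
  [/\ path E s p, last s p = d & uniq (s :: p)].

Definition two_parallel_paths (E : rel V) (s d : V) : Prop :=
  s != d /\
  exists p1 p2 : seq V,
    [/\ is_st_path E s d p1, is_st_path E s d p2, p1 != p2,
        (forall x, x \in p1 -> x \in p2 -> x = d) /\
        (forall x y, E x y = ((x, y) \in path_edges s p1) || ((x, y) \in path_edges s p2))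
      & (forall v : V, (v \in s :: p1) || (v \in s :: p2))].

Definition fflow (E : rel V) (p : V -> V -> nat -> R) (f : V -> nat -> R)
  (u v : V) (t : nat) : R :=
  if #|[pred z | E u z]| == 1%N then f u t
  else f u t * p u v t / \sum_(z | E u z) p u z t.

Definition bflow (E : rel V) (p : V -> V -> nat -> R) (b : V -> nat -> R)
  (u v : V) (t : nat) : R :=
  if #|[pred z | E z v]| == 1%N then b v t
  else b v t * p u v t / \sum_(z | E z v) p z v t.

Definition linear_dynamics (E : rel V) (s d : V) (l : V -> R) (delta : R)
  (p : V -> V -> nat -> R) (f b : V -> nat -> R) : Prop :=
  [/\ (forall v t, v != s ->
         f v t.+1 = (1 - l v) * \sum_(z | E z v) fflow E p f z v t),
      (forall u t, u != d ->
         b u t.+1 = (1 - l u) * \sum_(z | E u z) bflow E p b u z t)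
    & (forall u v t, E u v ->
         p u v t.+1 = delta * (p u v t + fflow E p f u v t + bflow E p b u v t))].

End Model.

From mathcomp Require Import all_boot all_order all_algebra.
From mathcomp Require Import all_classical all_reals all_analysis.
From mathcomp Require Import ring lra.
Import Order.TTheory GRing.Theory Num.Theory.
Local Open Scope ring_scope.

(* On a simple path every vertex has at most one in- and
      one out-edge; for the union of two internally disjoint s-d paths this
      gives: no edge leaves d, no edge enters s, every v <> d has at most one
      predecessor and every u <> s has at most one successor.
   2. Flow invariant.  An edge flow is a share of its vertex flow, hence lies
      in [0, vertex flow].  A vertex with at most one predecessor therefore
      passes on at most the flow of that predecessor; with monotone inputs,
      induction gives p > 0, 0 <= f_v(t) <= f_s(t) (v <> d) and
      0 <= b_v(t) <= b_d(t) (v <> s).  Backward flows are forward flows of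
      the reversed graph, so one propagation lemma serves both directions.
   3. Recursion.  Thus p(t+1) <= delta (p(t) + c(t)) with c = f_s + b_d
      nondecreasing, whence p(t) <= delta^t p(0) + delta/(1-delta) c(t).
   4. The hypothesis t >= T_1 means delta^t p(0) <= c(0) <= c(t), so
      p(t) <= c(t)/(1-delta) <= 2 c(t)/(1-delta). *)

Section PathEdges.
Variable T : finType.

Lemma path_edges_mem {s : T} {p : seq T} {x y : T} :
  (x, y) \in path_edges s p -> (x \in s :: p) /\ (y \in p).
Proof.
elim: p s => [|a p IH] s //=.
rewrite /path_edges /= in_cons => /orP [/eqP [-> ->]|/IH [hx hy]].
  by rewrite !in_cons !eqxx.
by rewrite in_cons hx orbT in_cons hy orbT.
Qed.

Section SimplePath.
Variables (s : T) (p : seq T).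
Hypothesis simple : uniq (s :: p).

Lemma path_edges_pred z1 z2 v :
  (z1, v) \in path_edges s p -> (z2, v) \in path_edges s p -> z1 = z2.
Proof.
elim: p s simple => [|a q IH] s' //= /andP [_ Hu].
have Ha : a \notin q by case/andP: Hu.
rewrite /path_edges /= !in_cons.
case/orP => [/eqP [-> e2]|H1]; case/orP => [/eqP [-> e4]|H2] //.
- by have [_ h] := path_edges_mem H2; move: Ha; rewrite -e2 h.
- by have [_ h] := path_edges_mem H1; move: Ha; rewrite -e4 h.
- exact: IH Hu H1 H2.
Qed.

Lemma path_edges_succ u z1 z2 :
  (u, z1) \in path_edges s p -> (u, z2) \in path_edges s p -> z1 = z2.
Proof.
elim: p s simple => [|a q IH] s' //= /andP [Hs Hu].
rewrite /path_edges /= !in_cons.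
case/orP => [/eqP [e1 ->]|H1]; case/orP => [/eqP [e3 ->]|H2] //.
- by have [h _] := path_edges_mem H2; move: Hs; rewrite -e1 h.
- by have [h _] := path_edges_mem H1; move: Hs; rewrite -e3 h.
- exact: IH Hu H1 H2.
Qed.

Lemma path_edges_src_last x y : (x, y) \in path_edges s p -> x != last s p.
Proof.
elim: p s simple => [|a q IH] s' //= /andP [Hs Hu].
rewrite /path_edges /= in_cons => /orP [/eqP [-> _]|/(IH _ Hu) //].
by apply: contraNneq Hs => ->; rewrite mem_last.
Qed.

Lemma path_edges_tgt_head x y : (x, y) \in path_edges s p -> y != s.
Proof.
case/path_edges_mem => _ hy; case/andP: simple => Hs _.
by apply: contraNneq Hs => <-.
Qed.

End SimplePath.
End PathEdges.

Arguments path_edges_pred {T s p} simple {z1 z2 v}.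
Arguments path_edges_succ {T s p} simple {u z1 z2}.
Arguments path_edges_src_last {T s p} simple {x y}.
Arguments path_edges_tgt_head {T s p} simple {x y}.

Section TwoPaths.
Variables (V : finType) (E : rel V) (s d : V).
Hypothesis G : two_parallel_paths E s d.

Lemma two_paths_edge x y : E x y ->
  exists q, [/\ uniq (s :: q), last s q = d & (x, y) \in path_edges s q].
Proof.
case: G => _ [p1 [p2 [[_ L1 U1] [_ L2 U2] _ [_ HE] _]]].
by rewrite HE => /orP [H|H]; [exists p1 | exists p2].
Qed.

Lemma two_paths_src_neq_d {x y} : E x y -> x != d.
Proof. by case/two_paths_edge => q [U <-]; apply: path_edges_src_last. Qed.

Lemma two_paths_tgt_neq_s {x y} : E x y -> y != s.
Proof. by case/two_paths_edge => q [U _]; apply: path_edges_tgt_head. Qed.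

(* Away from d a vertex has at most one predecessor: the two paths share no
   vertex but d after s, so both in-edges lie on the same simple path. *)
Lemma two_paths_unique_pred v : v != d ->
  forall z1 z2, E z1 v -> E z2 v -> z1 = z2.
Proof.
move=> vd z1 z2.
case: G => _ [p1 [p2 [[_ _ U1] [_ _ U2] _ [Hd HE] _]]].
have common (q1 q2 : seq V) a b : (forall x, x \in q1 -> x \in q2 -> x = d) ->
    (a, v) \in path_edges s q1 -> (b, v) \in path_edges s q2 -> a = b.
  move=> Hq /path_edges_mem [_ h1] /path_edges_mem [_ h2].
  by move: vd; rewrite (Hq _ h1 h2) eqxx.
rewrite !HE => /orP [H1|H1] /orP [H2|H2].
- exact: (path_edges_pred (T := V) U1 H1 H2).
- exact: common Hd H1 H2.
- by apply/esym; apply: common Hd H2 H1.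
- exact: (path_edges_pred (T := V) U2 H1 H2).
Qed.

Lemma two_paths_unique_succ u : u != s ->
  forall z1 z2, E u z1 -> E u z2 -> z1 = z2.
Proof.
move=> us z1 z2 Hz1; have ud := two_paths_src_neq_d Hz1; move: Hz1.
case: G => _ [p1 [p2 [[_ _ U1] [_ _ U2] _ [Hd HE] _]]].
have common (q1 q2 : seq V) a b : (forall x, x \in q1 -> x \in q2 -> x = d) ->
    (u, a) \in path_edges s q1 -> (u, b) \in path_edges s q2 -> a = b.
  move=> Hq /path_edges_mem [h1 _] /path_edges_mem [h2 _].
  move: h1 h2; rewrite !in_cons (negbTE us) /= => h1 h2.
  by move: ud; rewrite (Hq _ h1 h2) eqxx.
rewrite !HE => /orP [H1|H1] /orP [H2|H2].
- exact: (path_edges_succ (T := V) U1 H1 H2).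
- exact: common Hd H1 H2.
- by apply/esym; apply: common Hd H2 H1.
- exact: (path_edges_succ (T := V) U2 H1 H2).
Qed.

End TwoPaths.

Arguments two_paths_src_neq_d {V E s d} G {x y}.
Arguments two_paths_tgt_neq_s {V E s d} G {x y}.
Arguments two_paths_unique_pred {V E s d} G v.
Arguments two_paths_unique_succ {V E s d} G u.

Section Flows.
Variables (R : realType) (V : finType).

Lemma share_bound (P : pred V) (w : V -> R) (a : R) v :
  P v -> (forall z, P z -> 0 < w z) -> 0 <= a ->
  0 <= a * w v / \sum_(z | P z) w z <= a.
Proof.
move=> Pv wpos a0.
have le_wS : w v <= \sum_(z | P z) w z.
  rewrite (bigD1 v) //= lerDl sumr_ge0 // => z /andP [Pz _].
  exact/ltW/wpos.
have S0 : 0 < \sum_(z | P z) w z by apply: lt_le_trans le_wS; exact: wpos.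
have q0 : 0 <= w v / \sum_(z | P z) w z by rewrite divr_ge0 // ltW // wpos.
have q1 : w v / \sum_(z | P z) w z <= 1 by rewrite ler_pdivrMr // mul1r.
by rewrite -mulrA mulr_ge0 //= ler_piMr.
Qed.

Lemma fflow_bound {E : rel V} {p} {f : V -> nat -> R} {u v t} :
  E u v -> (forall z, E u z -> 0 < p u z t) -> 0 <= f u t ->
  0 <= fflow E p f u v t <= f u t.
Proof.
move=> Euv ppos f0; rewrite /fflow; case: ifP => _; first by rewrite f0 lexx.
exact: share_bound.
Qed.

Lemma bflow_reverse (E : rel V) p (b : V -> nat -> R) u v t :
  bflow E p b u v t = fflow (fun x y => E y x) (fun x y => p y x) b v u t.
Proof. by []. Qed.

Lemma bflow_bound {E : rel V} {p} {b : V -> nat -> R} {u v t} :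
  E u v -> (forall z, E z v -> 0 < p z v t) -> 0 <= b v t ->
  0 <= bflow E p b u v t <= b v t.
Proof. by rewrite bflow_reverse; exact: fflow_bound. Qed.

Lemma sum_at_most_one (P : pred V) (F : V -> R) (M : R) :
  (forall z1 z2, P z1 -> P z2 -> z1 = z2) ->
  (forall z, P z -> 0 <= F z <= M) -> 0 <= M ->
  0 <= \sum_(z | P z) F z <= M.
Proof.
move=> uniqP FM M0; case: (pickP P) => [z Pz|none]; last first.
  by rewrite big_pred0 // lexx.
rewrite (big_pred1 z) ?FM // => x.
by apply/idP/eqP => [Px|->]; [exact: uniqP|].
Qed.

Lemma propagated_flow_bound (E : rel V) p (f : V -> nat -> R) (lw M : R) w t :
  (forall x y, E x y -> 0 < p x y t) ->
  (forall z1 z2, E z1 w -> E z2 w -> z1 = z2) ->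
  (forall z, E z w -> 0 <= f z t <= M) ->
  0 <= lw <= 1 -> 0 <= M ->
  0 <= (1 - lw) * \sum_(z | E z w) fflow E p f z w t <= M.
Proof.
move=> ppos uniq_pred fM /andP [l0 l1] M0.
have /andP [S0 SM] : 0 <= \sum_(z | E z w) fflow E p f z w t <= M.
  apply: sum_at_most_one => // z Ezw.
  have /andP [fz0 fzM] := fM z Ezw.
  have /andP [h0 h1] := fflow_bound Ezw (ppos z) fz0.
  by rewrite h0 (le_trans h1).
apply/andP; split; first by rewrite mulr_ge0 // subr_ge0.
by apply: le_trans (_ : _ <= 1 * M) _; [apply: ler_pM; lra | rewrite mul1r].
Qed.

End Flows.

Arguments fflow_bound {R V E p f u v t}.
Arguments bflow_bound {R V E p b u v t}.

Lemma geometric_recursion_bound (R : realFieldType) (delta : R) (x c : nat -> R) :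
  0 <= delta < 1 -> 0 <= c 0%N -> (forall t, c t <= c t.+1) ->
  (forall t, x t.+1 <= delta * (x t + c t)) ->
  forall t, x t <= delta ^+ t * x 0%N + delta / (1 - delta) * c t.
Proof.
move=> /andP [d0 d1] c0 cmon xrec; set K := delta / (1 - delta).
have dn : 1 - delta != 0 by rewrite subr_eq0 eq_sym lt_eqF.
have K0 : 0 <= K by rewrite divr_ge0 // subr_ge0 ltW.
elim => [|t IH]; first by rewrite expr0 mul1r lerDl mulr_ge0.
have shift : delta * (delta ^+ t * x 0%N + K * c t + c t) =
             delta ^+ t.+1 * x 0%N + K * c t by rewrite exprS /K; field.
apply: le_trans (xrec t) _.
apply: le_trans (_ : _ <= delta * (delta ^+ t * x 0%N + K * c t + c t)) _.
  by rewrite ler_wpM2l // lerD2r.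
by rewrite shift lerD2l ler_wpM2l.
Qed.

Lemma geometric_decay_below {R : realType} {delta x c : R} {t : nat} :
  0 < delta < 1 -> 0 < x -> 0 < c ->
  ln (x / c) / ln (1 / delta) <= t%:R -> delta ^+ t * x <= c.
Proof.
move=> /andP [d0 d1] x0 c0.
have L0 : 0 < ln (1 / delta) by apply: ln_gt0; rewrite div1r invf_gt1.
have dt0 : 0 < delta ^+ t by rewrite exprn_gt0.
have lnXt : t%:R * ln (1 / delta) = ln ((delta ^+ t)^-1).
  by rewrite -exprVn lnXn ?mulr_natl ?invr_gt0 // div1r.
rewrite ler_pdivrMr // lnXt ler_ln ?posrE ?invr_gt0 ?divr_gt0 //.
by rewrite ler_pdivrMr // -ler_pdivlMl // mulrC.
Qed.

Section Dynamics.
Variables (R : realType) (V : finType) (E : rel V) (s d : V).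
Variables (l : V -> R) (delta : R) (p : V -> V -> nat -> R) (f b : V -> nat -> R).
Hypotheses (G : two_parallel_paths E s d) (l01 : forall v, 0 <= l v <= 1).
Hypotheses (delta01 : 0 < delta < 1) (dyn : linear_dynamics E s d l delta p f b).
Hypotheses (fs_pos : forall t, 0 < f s t) (fs_mon : forall t, f s t <= f s t.+1).
Hypotheses (bd_pos : forall t, 0 < b d t) (bd_mon : forall t, b d t <= b d t.+1).
Hypothesis p0_pos : forall u v, E u v -> 0 < p u v 0%N.
Hypothesis f0_bound : forall v, v != s -> v != d -> 0 <= f v 0%N <= f s 0%N.
Hypothesis b0_bound : forall v, v != s -> v != d -> 0 <= b v 0%N <= b d 0%N.

Definition bounded_state (t : nat) : Prop :=
  [/\ forall x y, E x y -> 0 < p x y t,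
      forall v, v != d -> 0 <= f v t <= f s t
    & forall v, v != s -> 0 <= b v t <= b d t].

Lemma bounded_state0 : bounded_state 0.
Proof.
split => // v vx.
- by case: (eqVneq v s) => [->|vs]; [rewrite lexx ltW | exact: f0_bound].
- by case: (eqVneq v d) => [->|vd]; [rewrite lexx ltW | exact: b0_bound].
Qed.

(* The invariant propagates: pheromones stay positive as sums of positive
   and nonnegative terms, and each internal vertex forwards at most the
   flow of its unique predecessor, bounded by the nondecreasing input. *)
Lemma bounded_state_step t : bounded_state t -> bounded_state t.+1.
Proof.
case: dyn => fdyn bdyn pdyn [ppos fbnd bbnd].
have fflow0 x y : E x y -> 0 <= fflow E p f x y t.
  move=> Exy; have /andP [fx0 _] := fbnd x (two_paths_src_neq_d G Exy).
  by case/andP: (fflow_bound Exy (ppos x) fx0).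
have bflow0 x y : E x y -> 0 <= bflow E p b x y t.
  move=> Exy; have /andP [by0 _] := bbnd y (two_paths_tgt_neq_s G Exy).
  by case/andP: (bflow_bound Exy (fun z => ppos z y) by0).
split.
- move=> x y Exy; rewrite pdyn // mulr_gt0 //; first by case/andP: delta01.
  by rewrite -addrA ltr_pwDl ?ppos ?addr_ge0 ?fflow0 ?bflow0.
- move=> v vd; case: (eqVneq v s) => [->|vs]; first by rewrite lexx ltW.
  rewrite fdyn //; apply: propagated_flow_bound => //.
  + exact: two_paths_unique_pred G v vd.
  + move=> z Ez; have /andP [fz0 fzs] := fbnd z (two_paths_src_neq_d G Ez).
    by rewrite fz0 (le_trans fzs (fs_mon t)).
  + exact: ltW (fs_pos _).
- move=> u us; case: (eqVneq u d) => [->|ud]; first by rewrite lexx ltW.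
  rewrite bdyn //; apply: (@propagated_flow_bound R V (fun x y => E y x)
      (fun x y => p y x)) => //.
  + by move=> x y Eyx; apply: ppos.
  + exact: two_paths_unique_succ G u us.
  + move=> z Ez; have /andP [bz0 bzd] := bbnd z (two_paths_tgt_neq_s G Ez).
    by rewrite bz0 (le_trans bzd (bd_mon t)).
  + exact: ltW (bd_pos _).
Qed.

Lemma bounded_state_all t : bounded_state t.
Proof. by elim: t => [|t]; [exact: bounded_state0 | exact: bounded_state_step]. Qed.

Lemma pheromone_recursion u v : E u v ->
  forall t, p u v t.+1 <= delta * (p u v t + (f s t + b d t)).
Proof.
move=> Euv t; case: dyn => _ _ pdyn; case: (bounded_state_all t) => ppos fbnd bbnd.
have /andP [fu0 fus] := fbnd u (two_paths_src_neq_d G Euv).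
have /andP [bv0 bvd] := bbnd v (two_paths_tgt_neq_s G Euv).
have /andP [_ ff] := fflow_bound Euv (ppos u) fu0.
have /andP [_ bb] := bflow_bound Euv (fun z => ppos z v) bv0.
rewrite pdyn //; apply: ler_wpM2l; first by case/andP: delta01 => /ltW.
by rewrite -addrA lerD2l lerD // ?(le_trans ff) ?(le_trans bb).
Qed.

End Dynamics.

Arguments pheromone_recursion {R V E s d l delta p f b}.

Theorem mainTheorem12 (R : realType) (V : finType) (E : rel V) (s d : V)
  (l : V -> R) (delta : R) (p : V -> V -> nat -> R) (f b : V -> nat -> R) :
  two_parallel_paths E s d ->
  (forall v, 0 <= l v <= 1) ->
  0 < delta < 1 ->
  linear_dynamics E s d l delta p f b ->
  (forall t, 0 < f s t) -> (forall t, f s t <= f s t.+1) ->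
  (forall t, 0 < b d t) -> (forall t, b d t <= b d t.+1) ->
  (forall u v, E u v -> 0 < p u v 0%N) ->
  (forall v, v != s -> v != d -> 0 <= f v 0%N <= f s 0%N) ->
  (forall v, v != s -> v != d -> 0 <= b v 0%N <= b d 0%N) ->
  forall (u v : V) (t : nat), E u v ->
    (forall x y, E x y ->
       ln (p x y 0%N / (f s 0%N + b d 0%N)) / ln (1 / delta) <= t%:R) ->
    p u v t <= 2 * (f s t + b d t) / (1 - delta).
Proof.
move=> G l01 delta01 dyn fs_pos fs_mon bd_pos bd_mon p0_pos f0 b0 u v t Euv T1.
set c := fun t => f s t + b d t.
have delta0 : 0 <= delta < 1 by case/andP: delta01 => /ltW -> ->.
have c_pos n : 0 < c n by rewrite addr_gt0.
have c_mon n : c n <= c n.+1 by rewrite lerD.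
have rec := @geometric_recursion_bound R delta (p u v) c delta0 (ltW (c_pos 0%N)) c_mon
  (pheromone_recursion G l01 delta01 dyn fs_pos fs_mon bd_pos bd_mon
     p0_pos f0 b0 u v Euv) t.
have decay : delta ^+ t * p u v 0%N <= c t.
  apply: le_trans (geometric_decay_below delta01 (p0_pos _ _ Euv) (c_pos 0%N)
    (T1 _ _ Euv)) _.
  exact: (nondecreasing_seqP c).1 c_mon _ _ (leq0n t).
have sum : c t + delta / (1 - delta) * c t = c t / (1 - delta).
  by field; rewrite subr_eq0 eq_sym lt_eqF //; case/andP: delta01.
have ct_div : 0 <= c t / (1 - delta).
  by rewrite divr_ge0 ?ltW // subr_gt0; case/andP: delta01.
rewrite -/(c t) -mulrA; apply: le_trans rec (le_trans _ (ler_peMl ct_div _)).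
  by rewrite -sum lerD2r.
by rewrite ler1n.
Qed.
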